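(* Let $Q$ be a quiver (no framing, arbitrary orientation) whose underlying graph is the affine Dynkin graph $\widetilde{A}_r$ (a cycle with $r+1$ vertices and $r+1$ edges; for $r=0$ a single loop), let $\beta=(n,\dots,n)$, and put the complete standard filtration at each vertex. Then $\mathbb{C}[\mathfrak{b}^{\oplus r+1}]^{\mathbb{U}_\beta}\cong\mathbb{C}[\mathfrak{t}^{\oplus r+1}]$, i.e. the invariant ring is the subalgebra generated by the diagonal entries of the $r+1$ matrices.
   Context: At each vertex put $\mathbb{C}^n$ with the flag $0\subset\mathbb{C}^1\subset\cdots\subset\mathbb{C}^n$ of standard coordinate subspaces; the filtered representation space is $\mathfrak{b}^{\oplus Q_1}$, tuples $(A_a)$ of upper triangular $n\times n$ matrices, one per arrow. $\mathbb{U}_\beta=U^{Q_0}$, $U$ the upper unitriangular $n\times n$ matrices, acting by $(u_i)\cdot(A_a)=(u_{h(a)}A_au_{t(a)}^{-1})$ with $h,t$ head and tail. $\mathfrak{t}$ denotes diagonal matrices. *)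

From HB Require Import structures.
From mathcomp Require Import all_boot all_order all_algebra.
From mathcomp Require Import reals.
From mathcomp Require Import complex.
From mathcomp Require Import mpoly.

Set Implicit Arguments.
Unset Strict Implicit.
Unset Printing Implicit Defensive.

Import Order.TTheory GRing.Theory Num.Theory.
Local Open Scope ring_scope.

(* Quiver with underlying graph the affine Dynkin graph ~A_r:
   vertices 'I_r.+1, arrows 'I_r.+1; arrow a joins vertex a and vertex a+1
   (mod r+1); the orientation o a decides the direction:
   o a = true : a -> a+1,  o a = false : a+1 -> a.
   For r = 0 this is a single loop at the unique vertex. *)
Definition cyc_next (r : nat) (v : 'I_r.+1) : 'I_r.+1 := ordS v.

Definition qhead (r : nat) (o : 'I_r.+1 -> bool) (a : 'I_r.+1) : 'I_r.+1 :=
  if o a then cyc_next a else a.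
Definition qtail (r : nat) (o : 'I_r.+1 -> bool) (a : 'I_r.+1) : 'I_r.+1 :=
  if o a then a else cyc_next a.

(* upper triangular (= stabilizer of the standard complete flag) *)
Definition upper_tri (F : nzRingType) (n : nat) (A : 'M[F]_n) : Prop :=
  forall i j : 'I_n, (j < i)%N -> A i j = 0.

Definition unitri (F : nzRingType) (n : nat) (u : 'M[F]_n) : Prop :=
  upper_tri u /\ forall i : 'I_n, u i i = 1.

(* Coordinates of b^{+(r+1)}: the entry (i,j), i <= j, of the matrix at arrow a *)
Definition bidx (r n : nat) :=
  {x : 'I_r.+1 * ('I_n * 'I_n) | (x.2.1 <= x.2.2)%N}.

Definition nbvars (r n : nat) : nat := #|{: bidx r n}|.

Definition coord_ring (F : nzRingType) (r n : nat) := {mpoly F[nbvars r n]}.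

Definition bcoords (F : nzRingType) (r n : nat) (A : 'I_r.+1 -> 'M[F]_n)
  : 'I_(nbvars r n) -> F :=
  fun k => let x := val (enum_val k) in A x.1 x.2.1 x.2.2.

Definition uact (F : comUnitRingType) (r n : nat) (o : 'I_r.+1 -> bool)
  (u : 'I_r.+1 -> 'M[F]_n) (A : 'I_r.+1 -> 'M[F]_n) : 'I_r.+1 -> 'M[F]_n :=
  fun a => u (qhead o a) *m A a *m invmx (u (qtail o a)).

Definition U_invariant (F : comUnitRingType) (r n : nat) (o : 'I_r.+1 -> bool)
  (p : {mpoly F[nbvars r n]}) : Prop :=
  forall (u : 'I_r.+1 -> 'M[F]_n) (A : 'I_r.+1 -> 'M[F]_n),
    (forall v, unitri (u v)) -> (forall a, upper_tri (A a)) ->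
    p.@[bcoords (uact o u A)] = p.@[bcoords A].

(* Coordinates of t^{+(r+1)}: diagonal entry i of the matrix at arrow a *)
Definition ntvars (r n : nat) : nat := #|{: 'I_r.+1 * 'I_n}|.

Definition diag_bidx (r n : nat) (x : 'I_r.+1 * 'I_n) : bidx r n :=
  @exist _ (fun y : 'I_r.+1 * ('I_n * 'I_n) => (y.2.1 <= y.2.2)%N)
    (x.1, (x.2, x.2)) (leqnn x.2).

Definition diag_vars (F : nzRingType) (r n : nat)
  : (ntvars r n).-tuple {mpoly F[nbvars r n]} :=
  [tuple 'X_(enum_rank (diag_bidx (enum_val k))) | k < ntvars r n].

From mathcomp Require Import all_boot all_order all_algebra.
From mathcomp Require Import reals complex mpoly.
From mathcomp Require Import ring zify.

(* Conjugating an upper triangular matrix by unitriangular ones does not change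
   its diagonal, so polynomials in the diagonal entries are invariant.
   Conversely, clearing entry (i, j) of every A_a at once by the transvections
   u_v = 1 + x_v E_ij amounts to solving x_h(a) A_a[j,j] - x_t(a) A_a[i,i] = -A_a[i,j]
   for all arrows a: r + 1 equations in r + 1 unknowns.  When all these systems
   are nondegenerate, the off-diagonal entries can be cleared one position at a
   time, moving away from the diagonal, so an invariant p satisfies
   p(A) = p(diag A).  Nondegeneracy is the nonvanishing of a polynomial G in the
   coordinates, and G is not the zero polynomial; over an infinite field
   (p - p o diag) G = 0 then forces p = p o diag. *)

Set Implicit Arguments.
Unset Strict Implicit.
Unset Printing Implicit Defensive.

Import GRing.Theory Num.Theory.
Local Open Scope ring_scope.

Section UpperTriangular.
Variables (R : nzRingType) (n : nat).
Implicit Types A B : 'M[R]_n.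

Lemma upper_tri_mul A B : upper_tri A -> upper_tri B -> upper_tri (A *m B).
Proof.
move=> A_up B_up i j lt_ji; rewrite mxE big1 // => k _.
case: (ltnP k i) => [lt_ki|le_ik]; first by rewrite A_up ?mul0r.
by rewrite B_up ?mulr0 // (leq_trans lt_ji le_ik).
Qed.

Lemma mulmx_upper_diag A B i :
  upper_tri A -> upper_tri B -> (A *m B) i i = A i i * B i i.
Proof.
move=> A_up B_up; rewrite mxE (bigD1 i) //= big1 ?addr0 // => k /negbTE neq_ki.
case: (ltngtP k i) => [lt_ki|lt_ik|/val_inj eq_ki]; first by rewrite A_up ?mul0r.
  by rewrite B_up ?mulr0.
by rewrite eq_ki eqxx in neq_ki.
Qed.

End UpperTriangular.

Lemma unitri_invmx (R : comUnitRingType) n (w : 'M[R]_n) :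
  unitri w -> unitri (invmx w).
Proof.
move=> [w_up w_diag]; have [w_unit|/negbTE w_nunit] := boolP (w \in unitmx); last first.
  by rewrite /invmx w_nunit.
have wKw : invmx w *m w = 1%:M by rewrite mulVmx.
have up : upper_tri (invmx w).
  move=> i; suff below_diag m (j : 'I_n) :
      j = m :> nat -> (j < i)%N -> invmx w i j = 0 by move=> j; apply: below_diag.
  elim/ltn_ind: m j => m IH j eq_jm lt_ji.
  have := congr1 (fun M : 'M[R]_n => M i j) wKw; rewrite !mxE (bigD1 j) //= big1.
    by rewrite w_diag mulr1 addr0 => ->; rewrite -val_eqE (gtn_eqF lt_ji).
  move=> k /negbTE neq_kj; case: (ltngtP k j) => [lt_kj|lt_jk|/val_inj eq_kj].
  - by rewrite (IH k) ?mul0r -?eq_jm // (ltn_trans lt_kj).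
  - by rewrite w_up ?mulr0.
  - by rewrite eq_kj eqxx in neq_kj.
split=> // i; have := congr1 (fun M : 'M[R]_n => M i i) wKw.
by rewrite mulmx_upper_diag // w_diag mulr1 mxE eqxx.
Qed.

Lemma uact_diag (R : comUnitRingType) r n (o : 'I_r.+1 -> bool)
    (u A : 'I_r.+1 -> 'M[R]_n) a k :
  (forall v, unitri (u v)) -> upper_tri (A a) -> uact o u A a k k = A a k k.
Proof.
move=> u_unitri A_up; have [uh_up uh_diag] := u_unitri (qhead o a).
have [ut_up ut_diag] := unitri_invmx (u_unitri (qtail o a)).
rewrite /uact mulmx_upper_diag ?mulmx_upper_diag ?uh_diag ?ut_diag ?mul1r ?mulr1 //.
exact: upper_tri_mul.
Qed.

Lemma diag_vars_invariant (R : comUnitRingType) r n (o : 'I_r.+1 -> bool)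
    (q : {mpoly R[ntvars r n]}) :
  U_invariant o (comp_mpoly (diag_vars R r n) q).
Proof.
move=> u A u_unitri A_up; rewrite !comp_mpoly_meval; apply: meval_eq => t.
by rewrite tnth_mktuple !mevalXU /bcoords enum_rankK /= uact_diag.
Qed.

Section Transvection.
Variables (R : comUnitRingType) (n : nat).
Implicit Types (B : 'M[R]_n) (i j k l : 'I_n).

Definition transvection i j (c : R) : 'M[R]_n := 1%:M + c *: delta_mx i j.

Lemma delta_mulmxE B i j k l : (delta_mx i j *m B) k l = (k == i)%:R * B j l.
Proof.
rewrite mxE (bigD1 j) //= big1 ?addr0; first by rewrite mxE eqxx andbT.
by move=> m /negbTE neq_mj; rewrite mxE neq_mj andbF mul0r.
Qed.

Lemma mulmx_deltaE B i j k l : (B *m delta_mx i j) k l = (l == j)%:R * B k i.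
Proof.
rewrite mxE (bigD1 i) //= big1 ?addr0; first by rewrite mxE eqxx /= mulrC.
by move=> m /negbTE neq_mi; rewrite mxE neq_mi mulr0.
Qed.

Lemma transvection_unitri i j c : (i < j)%N -> unitri (transvection i j c).
Proof.
move=> lt_ij; split=> [k l lt_lk|k]; rewrite !mxE.
  have -> : (k == l) = false by rewrite -val_eqE gtn_eqF.
  case: (eqVneq k i) => [eq_ki|]; case: (eqVneq l j) => [eq_lj|] //=;
    rewrite ?mulr0 ?addr0 //.
  by move: lt_lk; rewrite eq_ki eq_lj ltnNge ltnW.
rewrite eqxx; case: (eqVneq k i) => [eq_ki|_]; case: (eqVneq k j) => [eq_kj|_];
  rewrite /= ?mulr0 ?addr0 //.
by move: lt_ij; rewrite -eq_ki -eq_kj ltnn.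
Qed.

Lemma transvection_inv i j c :
  i != j -> invmx (transvection i j c) = transvection i j (- c).
Proof.
move=> neq_ij; have tKt : transvection i j c *m transvection i j (- c) = 1%:M.
  rewrite /transvection mulmxDl !mulmxDr !mul1mx !mulmx1 -!scalemxAl -!scalemxAr.
  by rewrite mul_delta_mx_0 1?eq_sym // !scaler0 addr0 scaleNr subrK.
have [t_unit _] := mulmx1_unit tKt.
by rewrite -[invmx _]mulmx1 -tKt mulmxA mulVmx // mul1mx.
Qed.

Lemma transvection_conjE i j c d B k l : B j i = 0 ->
  (transvection i j c *m B *m transvection i j (- d)) k l
  = B k l + c * (k == i)%:R * B j l - d * (l == j)%:R * B k i.
Proof.
move=> Bji0; rewrite /transvection !(mulmxDl, mulmxDr) !(mul1mx, mulmx1).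
have addE (M N : 'M[R]_n) : (M + N) k l = M k l + N k l by rewrite mxE.
have scaleE a (M : 'M[R]_n) : (a *: M) k l = a * M k l by rewrite mxE.
rewrite -!scalemxAl -!scalemxAr !addE !scaleE !mulmx_deltaE !delta_mulmxE Bji0.
ring.
Qed.

End Transvection.

Section EdgeSystem.
Variables (r n : nat) (o : 'I_r.+1 -> bool).

(* Entry (v, a) is the coefficient of x_v in the equation attached to arrow a
   that clears entry (i, j) of D_a by the transvections 1 + x_v E_ij. *)
Definition edge_system (R : nzRingType) (D : 'I_r.+1 -> 'M[R]_n) (i j : 'I_n)
  : 'M[R]_r.+1 :=
  \matrix_(v, a) ((v == qhead o a)%:R * D a j j - (v == qtail o a)%:R * D a i i).

Definition nondegenerate (R : comNzRingType) (D : 'I_r.+1 -> 'M[R]_n) : bool :=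
  [forall i : 'I_n, forall j : 'I_n, (i < j)%N ==> (\det (edge_system D i j) != 0)].

Lemma edge_system_mulE (R : nzRingType) (D : 'I_r.+1 -> 'M[R]_n) i j
    (y : 'rV_r.+1) a :
  (y *m edge_system D i j) 0 a
  = y 0 (qhead o a) * D a j j - y 0 (qtail o a) * D a i i.
Proof.
have pick (c : 'I_r.+1) (d : R) : \sum_v y 0 v * ((v == c)%:R * d) = y 0 c * d.
  rewrite (bigD1 c) //= eqxx mul1r big1 ?addr0 // => v /negbTE ->.
  by rewrite mul0r mulr0.
by rewrite mxE; under eq_bigr do rewrite mxE mulrBr; rewrite sumrB !pick.
Qed.

Lemma eq_edge_system (R : nzRingType) (D D' : 'I_r.+1 -> 'M[R]_n) i j :
  (forall a k, D a k k = D' a k k) -> edge_system D i j = edge_system D' i j.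
Proof. by move=> eqD; apply/matrixP => v a; rewrite !mxE !eqD. Qed.

Lemma eq_nondegenerate (R : comNzRingType) (D D' : 'I_r.+1 -> 'M[R]_n) :
  (forall a k, D a k k = D' a k k) -> nondegenerate D = nondegenerate D'.
Proof.
move=> eqD; apply: eq_forallb => i; apply: eq_forallb => j.
by rewrite (eq_edge_system _ _ eqD).
Qed.

Lemma map_edge_system (R S : comNzRingType) (f : {rmorphism R -> S}) D i j :
  map_mx f (edge_system D i j) = edge_system (fun a => map_mx f (D a)) i j.
Proof. by apply/matrixP => v a; rewrite !mxE rmorphB !rmorphM !rmorph_nat. Qed.

Lemma edge_system_solve (F : fieldType) (D : 'I_r.+1 -> 'M[F]_n) i j b :
  \det (edge_system D i j) != 0 ->
  exists x : 'I_r.+1 -> F,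
    forall a, x (qhead o a) * D a j j - x (qtail o a) * D a i i = b a.
Proof.
move=> det_neq0; have M_unit : edge_system D i j \in unitmx by rewrite unitmxE unitfE.
pose y := \row_a b a *m invmx (edge_system D i j).
exists (fun v => y 0 v) => a; rewrite -edge_system_mulE.
by rewrite /y -mulmxA mulVmx // mulmx1 mxE.
Qed.

End EdgeSystem.

Section ConjugateByTransvections.
Variables (R : comUnitRingType) (r n : nat) (o : 'I_r.+1 -> bool).
Variable A : 'I_r.+1 -> 'M[R]_n.
Hypothesis A_up : forall a, upper_tri (A a).
Variables (i j : 'I_n) (x : 'I_r.+1 -> R).
Hypothesis lt_ij : (i < j)%N.

Let A' := uact o (fun v => transvection i j (x v)) A.

Lemma uact_transvectionE a k l : A' a k l =
  A a k l + x (qhead o a) * (k == i)%:R * A a j l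
          - x (qtail o a) * (l == j)%:R * A a k i.
Proof.
have neq_ij : i != j by rewrite -val_eqE ltn_eqF.
by rewrite /A' /uact transvection_inv // transvection_conjE // A_up.
Qed.

Lemma uact_transvection_upper a : upper_tri (A' a).
Proof.
move=> k l lt_lk; rewrite uact_transvectionE A_up // add0r.
have row_i : (k == i)%:R * A a j l = 0.
  case: eqP => [eq_ki|_]; last by rewrite mul0r.
  by rewrite A_up ?mulr0 // (ltn_trans lt_lk) // eq_ki.
have col_j : (l == j)%:R * A a k i = 0.
  case: eqP => [eq_lj|_]; last by rewrite mul0r.
  by rewrite A_up ?mulr0 // (ltn_trans lt_ij) // -eq_lj.
by rewrite -!mulrA row_i col_j !mulr0 subr0.
Qed.

Lemma uact_transvection_eq a (k l : 'I_n) : (k <= l)%N -> (l - k <= j - i)%N ->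
  ~~ ((k == i) && (l == j)) -> A' a k l = A a k l.
Proof.
move=> le_kl gap_kl neq_kl_ij; rewrite uact_transvectionE.
have row_i : (k == i)%:R * A a j l = 0.
  case: eqP => [eq_ki|_]; last by rewrite mul0r.
  rewrite eq_ki eqxx /= in neq_kl_ij.
  rewrite A_up ?mulr0 // ltn_neqAle val_eqE neq_kl_ij /=.
  by move: gap_kl le_kl lt_ij; rewrite eq_ki; lia.
have col_j : (l == j)%:R * A a k i = 0.
  case: eqP => [eq_lj|_]; last by rewrite mul0r.
  rewrite eq_lj eqxx andbT in neq_kl_ij.
  rewrite A_up ?mulr0 // ltn_neqAle val_eqE eq_sym neq_kl_ij /=.
  by move: gap_kl le_kl lt_ij; rewrite eq_lj; lia.
by rewrite -!mulrA row_i col_j !mulr0 subr0 addr0.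
Qed.

Lemma uact_transvection_diag a (k : 'I_n) : A' a k k = A a k k.
Proof.
apply: uact_transvection_eq; rewrite ?leqnn ?subnn //.
by apply/andP => -[/eqP-> /eqP eq_ij]; move: (lt_ij); rewrite eq_ij ltnn.
Qed.

Lemma uact_transvection_ij a :
  A' a i j = A a i j + x (qhead o a) * A a j j - x (qtail o a) * A a i i.
Proof. by rewrite uact_transvectionE !eqxx !mulr1. Qed.

End ConjugateByTransvections.

Lemma eq_bcoords (R : nzRingType) r n (A B : 'I_r.+1 -> 'M[R]_n) :
  (forall a, A a = B a) -> bcoords A =1 bcoords B.
Proof. by move=> eqAB k; rewrite /bcoords eqAB. Qed.

Definition diagpart (R : nzRingType) r n (A : 'I_r.+1 -> 'M[R]_n) a : 'M[R]_n :=
  diag_mx (\row_k A a k k).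

Lemma eq_diagpart (R : nzRingType) r n (A B : 'I_r.+1 -> 'M[R]_n) a :
  (forall a k, A a k k = B a k k) -> diagpart A a = diagpart B a.
Proof. by move=> eqAB; congr diag_mx; apply/rowP => k; rewrite !mxE. Qed.

Section Elimination.
Variables (F : fieldType) (r n : nat) (o : 'I_r.+1 -> bool).
Implicit Types A : 'I_r.+1 -> 'M[F]_n.

(* Conjugating by 1 + x E_ij only changes row i right of column j and column j
   above row i, i.e. positions of larger rank, besides (i, j) itself. *)
Definition offdiag_rank (k l : 'I_n) : nat := ((l - k) * n + k)%N.

Lemma offdiag_rank_gap (k l i j : 'I_n) : (k < l)%N -> (i < j)%N ->
  (offdiag_rank k l < offdiag_rank i j)%N -> (l - k <= j - i)%N.
Proof. by rewrite /offdiag_rank; have := ltn_ord k; have := ltn_ord i; nia. Qed.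

Lemma offdiag_rank_inj (k l i j : 'I_n) : (k < l)%N -> (i < j)%N ->
  offdiag_rank k l = offdiag_rank i j -> k = i /\ l = j.
Proof.
rewrite /offdiag_rank => lt_kl lt_ij eq_rank.
suff [eq_ki eq_lj] : k = i :> nat /\ l = j :> nat by split; apply: val_inj.
by have := ltn_ord k; have := ltn_ord i; case: (ltngtP (l - k) (j - i)); nia.
Qed.

Lemma offdiag_rank_lt (k l : 'I_n) : (k < l)%N -> (offdiag_rank k l < n * n)%N.
Proof. by rewrite /offdiag_rank; have := ltn_ord l; nia. Qed.

Definition vanishes_below N A : Prop :=
  forall a (k l : 'I_n), (k < l)%N -> (offdiag_rank k l < N)%N -> A a k l = 0.

Lemma vanishes_belowW M N A : (M <= N)%N -> vanishes_below N A -> vanishes_below M A.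
Proof. by move=> le_MN A0 a k l lt_kl lt_rank; rewrite A0 // (leq_trans lt_rank). Qed.

Lemma vanishes_below_diagpart A a : upper_tri (A a) ->
  vanishes_below (n * n) A -> diagpart A a = A a.
Proof.
move=> A_up A0; apply/matrixP => k l; rewrite !mxE.
case: (ltngtP k l) => [lt_kl|lt_lk|/val_inj <-]; last by rewrite eqxx.
  have /negbTE-> : k != l by rewrite -val_eqE ltn_eqF.
  by rewrite mulr0n (A0 a k l lt_kl) ?offdiag_rank_lt.
have /negbTE-> : k != l by rewrite -val_eqE gtn_eqF.
by rewrite mulr0n A_up.
Qed.

Lemma vanishes_below_uact A N (i j : 'I_n) (x : 'I_r.+1 -> F) :
  (forall a, upper_tri (A a)) -> (i < j)%N -> offdiag_rank i j = N ->
  (forall a, x (qhead o a) * A a j j - x (qtail o a) * A a i i = - A a i j) ->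
  vanishes_below N A ->
  vanishes_below N.+1 (uact o (fun v => transvection i j (x v)) A).
Proof.
move=> A_up lt_ij rank_ij x_sol A0 a k l lt_kl.
rewrite ltnS leq_eqVlt => /orP[/eqP rank_kl|lt_rank].
  have [-> ->] := offdiag_rank_inj lt_kl lt_ij (etrans rank_kl (esym rank_ij)).
  by rewrite uact_transvection_ij // -addrA x_sol subrr.
rewrite uact_transvection_eq ?(A0 a k l) ?(ltnW lt_kl) //.
  by apply: offdiag_rank_gap; rewrite ?rank_ij.
apply/andP => -[/eqP eq_ki /eqP eq_lj].
by rewrite -rank_ij eq_ki eq_lj ltnn in lt_rank.
Qed.

Variable p : {mpoly F[nbvars r n]}.
Hypothesis p_inv : U_invariant o p.

Lemma invariant_diagpart_below d : forall N A, (n * n <= N + d)%N ->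
  (forall a, upper_tri (A a)) -> nondegenerate o A -> vanishes_below N A ->
  p.@[bcoords A] = p.@[bcoords (diagpart A)].
Proof.
elim: d => [|d IH] N A le_nN A_up A_nondeg A0.
  apply/esym/meval_eq/eq_bcoords => a; apply: vanishes_below_diagpart => //.
  by apply: vanishes_belowW A0; rewrite -[N]addn0.
have [[i j] /andP[/= lt_ij /eqP rank_ij]|no_ij] :=
  pickP [pred ij : 'I_n * 'I_n | (ij.1 < ij.2)%N && (offdiag_rank ij.1 ij.2 == N)].
  have /forallP/(_ i)/forallP/(_ j)/implyP/(_ lt_ij) det_ij := A_nondeg.
  have [x x_sol] := edge_system_solve (fun a => - A a i j) det_ij.
  pose u v := transvection i j (x v).
  have u_unitri v : unitri (u v) by apply: transvection_unitri.
  have diag_uA a k : uact o u A a k k = A a k k by apply: uact_transvection_diag.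
  rewrite -(p_inv u_unitri A_up) (IH N.+1 (uact o u A)) ?addSnnS //.
  - by apply/meval_eq/eq_bcoords => a; apply: eq_diagpart.
  - by move=> a; apply: uact_transvection_upper.
  - by rewrite (eq_nondegenerate _ diag_uA).
  - exact: vanishes_below_uact.
apply: (IH N.+1) => //; first by rewrite addSnnS.
move=> a k l lt_kl; rewrite ltnS leq_eqVlt => /orP[/eqP rank_kl|]; last exact: A0.
by have := no_ij (k, l); rewrite /= lt_kl rank_kl eqxx.
Qed.

Lemma invariant_diagpart A : (forall a, upper_tri (A a)) -> nondegenerate o A ->
  p.@[bcoords A] = p.@[bcoords (diagpart A)].
Proof. by move=> A_up A_nondeg; apply: (@invariant_diagpart_below (n * n) 0). Qed.

End Elimination.

Lemma rmorph_mpoly_eq (R : nzRingType) k (S : nzRingType)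
    (f g : {rmorphism {mpoly R[k]} -> S}) :
  (forall c, f c%:MP = g c%:MP) -> (forall i, f 'X_i = g 'X_i) -> f =1 g.
Proof.
move=> eqC eqX; have eqXm m : f 'X_[m] = g 'X_[m].
  by rewrite mpolyXE_id !rmorph_prod; apply: eq_bigr => i _; rewrite !rmorphXn eqX.
elim/mpolyind => [|c m p _ _ IH]; first by rewrite !rmorph0.
by rewrite -mul_mpolyC !rmorphD !rmorphM eqC eqXm IH.
Qed.

Section MpolyUni.
Variables (R : comNzRingType) (k : nat).

Lemma muniK (h : {mpoly R[k.+1]}) :
  (map_poly (@mwiden k R) (muni h)).['X_ord_max] = h.
Proof.
pose f := horner_eval 'X_ord_max \o map_poly (@mwiden k R) \o @muni k R.
apply: (@rmorph_mpoly_eq _ _ _ f idfun) => [c|i]; rewrite /f /=.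
  by rewrite muniC map_polyC /= mwidenC horner_evalE hornerC.
rewrite horner_evalE /muni /= mmapX mmap1U.
(* [muni] makes 'X_i a constant for i < k and sends 'X_k to 'X, via [split]. *)
case: splitP => [j /= eij|j /= eij].
  rewrite map_polyC hornerC /= mwidenX mnmwiden1; congr 'X_[U_(_)].
  by apply: val_inj.
rewrite map_polyX hornerX; congr 'X_[U_(_)]; apply: val_inj => /=.
by move: eij (ltn_ord i); rewrite ord1 addn0 => ->.
Qed.

Definition ext_last (v : 'I_k -> R) (s : R) (i : 'I_k.+1) : R :=
  if unlift ord_max i is Some j then v j else s.

Lemma meval_muni (v : 'I_k -> R) s (h : {mpoly R[k.+1]}) :
  h.@[ext_last v s] = (map_poly (meval v) (muni h)).[s].
Proof.
pose f := horner_eval s \o map_poly (meval v) \o @muni k R.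
apply: (@rmorph_mpoly_eq _ _ _ (meval (ext_last v s)) f) => [c|i]; rewrite /f /=.
  by rewrite mevalC muniC map_polyC /= horner_evalE hornerC mevalC.
rewrite mevalXU horner_evalE /muni /= mmapX mmap1U /ext_last.
case: splitP => [j /= eij|j /= eij]; case: unliftP => [j' ei|ei] /=.
- rewrite map_polyC hornerC /= mevalXU; congr (v _); apply: val_inj.
  by move: eij; rewrite ei /= /bump leqNgt ltn_ord.
- by move: (ltn_ord j); rewrite -eij ei ltnn.
- move: eij; rewrite ord1 ei /= /bump leqNgt (ltn_ord j') add0n addn0 => ejk.
  by move: (ltn_ord j'); rewrite /= ejk ltnn.
- by rewrite map_polyX hornerX.
Qed.

End MpolyUni.

Section Identity.
Variable F : numDomainType.

Lemma poly_eq0_horner (P : {poly F}) : (forall s, P.[s] = 0) -> P = 0.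
Proof.
move=> P0; apply/eqP; apply: contraT => P_neq0.
have := max_poly_roots P_neq0 (rs := [seq i%:R | i <- iota 0 (size P)]).
rewrite size_map size_iota ltnn; apply.
  by apply/allP => _ /mapP[i _ ->]; rewrite /root P0.
by rewrite map_inj_uniq ?iota_uniq // => i1 i2 /eqP; rewrite eqr_nat => /eqP.
Qed.

Lemma mpoly_eq0_meval k (h : {mpoly F[k]}) : (forall v, h.@[v] = 0) -> h = 0.
Proof.
elim: k h => [|k IH] h h0.
  by have := h0 (fun=> 0); rewrite [h]nvar0_mpolyC mevalC => ->; rewrite mpolyC0.
rewrite -[h]muniK; suff -> : muni h = 0 by rewrite map_poly0 horner0.
apply/polyP => e; rewrite coef0; apply: IH => v.
have /(congr1 (fun P : {poly F} => P`_e)) : map_poly (meval v) (muni h) = 0.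
  by apply: poly_eq0_horner => s; rewrite -meval_muni h0.
by rewrite coef_map coef0.
Qed.

Lemma mpoly_eq_off_zeros k (G P Q : {mpoly F[k]}) : G != 0 ->
  (forall v, G.@[v] != 0 -> P.@[v] = Q.@[v]) -> P = Q.
Proof.
move=> G_neq0 PQ; apply/eqP; rewrite -subr_eq0.
suff /eqP : (P - Q) * G = 0 by rewrite mulf_eq0 (negbTE G_neq0) orbF.
apply: mpoly_eq0_meval => v; rewrite mevalM mevalB.
by have [->|/PQ->] := eqVneq G.@[v] 0; rewrite ?mulr0 ?subrr ?mul0r.
Qed.

End Identity.

Section GenericPoint.
Variables (r n : nat).

Definition coords_mx (R : nzRingType) (v : 'I_(nbvars r n) -> R) a : 'M[R]_n :=
  \matrix_(k, l) if insub (a, (k, l)) : option (bidx r n) is Some y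
                 then v (enum_rank y) else 0.

Lemma coords_mx_insub (R : nzRingType) (v : 'I_(nbvars r n) -> R) a (k l : 'I_n)
    (le_kl : (k <= l)%N) :
  coords_mx v a k l = v (enum_rank (exist _ (a, (k, l)) le_kl : bidx r n)).
Proof. by rewrite mxE insubT; congr (v (enum_rank _)); apply: val_inj. Qed.

Lemma coords_mx_upper (R : nzRingType) (v : 'I_(nbvars r n) -> R) a :
  upper_tri (coords_mx v a).
Proof. by move=> k l lt_lk; rewrite mxE insubF //= leqNgt lt_lk. Qed.

Lemma bcoords_coords_mx (R : nzRingType) (v : 'I_(nbvars r n) -> R) :
  bcoords (coords_mx v) =1 v.
Proof.
move=> t; rewrite /bcoords; case: (enum_val t) (enum_valK t) => -[a [k l]] le_kl /= <-.
exact: coords_mx_insub.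
Qed.

Lemma coords_mx_bcoords (R : nzRingType) (A : 'I_r.+1 -> 'M[R]_n) a (k l : 'I_n) :
  (k <= l)%N -> coords_mx (bcoords A) a k l = A a k l.
Proof. by move=> le_kl; rewrite coords_mx_insub /bcoords enum_rankK. Qed.

Lemma map_coords_mx (R S : nzRingType) (f : {rmorphism R -> S}) v a :
  map_mx f (coords_mx v a) = coords_mx (f \o v) a.
Proof.
apply/matrixP => k l; rewrite !mxE.
by case: insub => [y|]; rewrite ?rmorph0.
Qed.

End GenericPoint.

Section Density.
Variables (F : numFieldType) (r n : nat) (o : 'I_r.+1 -> bool).

Definition nondeg_poly : {mpoly F[nbvars r n]} :=
  \prod_(i : 'I_n) \prod_(j : 'I_n | (i < j)%N)
     \det (edge_system o (coords_mx (fun t => 'X_t)) i j).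

Lemma meval_nondeg_poly v :
  (nondeg_poly.@[v] != 0) = nondegenerate o (coords_mx v).
Proof.
have -> : nondeg_poly.@[v] = \prod_(i : 'I_n) \prod_(j : 'I_n | (i < j)%N)
                               \det (edge_system o (coords_mx v) i j).
  rewrite rmorph_prod; apply: eq_bigr => i _.
  rewrite rmorph_prod; apply: eq_bigr => j _.
  rewrite -det_map_mx map_edge_system; congr (\det _); apply: eq_edge_system => a k.
  by rewrite map_coords_mx !mxE; case: insub => // y; rewrite /= mevalXU.
apply/prodf_neq0/forallP => [nz i|nd i _].
  by apply/forallP => j; apply/implyP => lt_ij; move/prodf_neq0: (nz i isT); apply.
by apply/prodf_neq0 => j lt_ij; move/forallP/(_ j)/implyP: (nd i); apply.
Qed.

(* The identity on all arrows but the last forces a kernel vector of the edge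
   system to be constant around the cycle; distinct diagonal entries on the
   last arrow then force it to vanish. *)
Definition nondeg_witness (a : 'I_r.+1) : 'M[F]_n :=
  if a == ord_max then diag_mx (\row_k k%:R) else 1%:M.

Lemma nondeg_witness_nondegenerate : nondegenerate o nondeg_witness.
Proof.
apply/forallP => i; apply/forallP => j; apply/implyP => lt_ij.
apply/det0P => -[y y_neq0 y_ker].
have edge a : y 0 (qhead o a) * nondeg_witness a j j
              = y 0 (qtail o a) * nondeg_witness a i i.
  by apply/eqP; rewrite -subr_eq0 -edge_system_mulE y_ker mxE.
have along a : a != ord_max -> y 0 (cyc_next a) = y 0 a.
  move=> /negbTE a_neq; have := edge a.
  rewrite /nondeg_witness a_neq !mxE !eqxx !mulr1.
  by rewrite /qhead /qtail; case: (o a).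
have const v : y 0 v = y 0 ord0.
  case: v => v; elim: v => [|v IH] lt_v; first by congr (y 0 _); apply: val_inj.
  have lt_vr1 : (v < r.+1)%N by apply: ltnW.
  rewrite -(IH lt_vr1) -(along (Ordinal lt_vr1)); last by rewrite -val_eqE /= ltn_eqF.
  by congr (y 0 _); apply: val_inj; rewrite /= modn_small.
have y0 : y 0 ord0 = 0.
  have := edge ord_max; rewrite /nondeg_witness eqxx !mxE !eqxx !mulr1n !const => /eqP.
  rewrite -subr_eq0 -mulrBr mulf_eq0 subr_eq0 eqr_nat => /orP[/eqP //|/eqP eq_ji].
  by rewrite eq_ji ltnn in lt_ij.
by move/negP: y_neq0; apply; apply/eqP/rowP => v; rewrite const y0 mxE.
Qed.

Lemma nondeg_poly_neq0 : nondeg_poly != 0.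
Proof.
apply: contraTneq nondeg_witness_nondegenerate => nondeg0.
rewrite -(@eq_nondegenerate _ _ o _ (coords_mx (bcoords nondeg_witness))) => [|a k].
  by rewrite -meval_nondeg_poly nondeg0 meval0 eqxx.
by rewrite coords_mx_bcoords.
Qed.

Definition diag_proj : (nbvars r n).-tuple {mpoly F[ntvars r n]} :=
  [tuple let x := val (enum_val t) in
         if x.2.1 == x.2.2 :> 'I_n then 'X_(enum_rank (x.1, x.2.1)) else 0
  | t < nbvars r n].

Definition diag_restriction (q : {mpoly F[nbvars r n]}) : {mpoly F[nbvars r n]} :=
  comp_mpoly (diag_vars F r n) (comp_mpoly diag_proj q).

Lemma diag_restrictionE q v :
  (diag_restriction q).@[v] = q.@[bcoords (diagpart (coords_mx v))].
Proof.
rewrite !comp_mpoly_meval; apply: meval_eq => t.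
rewrite tnth_mktuple /bcoords !mxE; case: (enum_val t) => -[a [k l]] le_kl /=.
case: eqP => _; last by rewrite mevalC mulr0n.
rewrite mevalXU tnth_mktuple mevalXU enum_rankK /= mulr1n insubT ?leqnn // => le_kk.
by congr (v (enum_rank _)); apply: val_inj.
Qed.

Lemma invariant_diag_restriction p : U_invariant o p -> diag_restriction p = p.
Proof.
move=> p_inv; apply: (mpoly_eq_off_zeros nondeg_poly_neq0) => v nondeg_v.
rewrite diag_restrictionE -(meval_eq p (bcoords_coords_mx v)).
rewrite (@invariant_diagpart _ _ _ o p p_inv (coords_mx v)) //.
  exact: coords_mx_upper.
by rewrite -meval_nondeg_poly.
Qed.

End Density.

Theorem mainTheorem4 (R : realType) (r n : nat) (o : 'I_r.+1 -> bool)
  (p : {mpoly R[i][nbvars r n]}) :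
  U_invariant o p <->
  exists q : {mpoly R[i][ntvars r n]}, p = comp_mpoly (diag_vars R[i] r n) q.
Proof.
split=> [p_inv|[q ->]]; last exact: diag_vars_invariant.
exists (comp_mpoly (diag_proj R[i] r n) p).
by rewrite -[LHS](invariant_diag_restriction p_inv).
Qed.
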